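(* In the setting described in the context, fix $i$ with $0\le w_i<1$ and $j\in\{1,\ldots,p\}$. Then \[ f_i^{(-j)}(x)=a_jx(1-x)^{p-2}+b_j(1-x)^{p-1},\qquad x\in[0,1], \] for some constants $a_j\ge0$ and $b_j\ge0$. If $f(\mathbf{w})>0$, then $f_i^{(-j)}(x)>0$ for all $x\in(0,1)$, which implies $a_j+b_j>0$. If $0<w_i<1$, then $b_j=f_i^{(-j)}(0)$ and $a_j=[f_{-j}(\mathbf{w})-b_j(1-w_i)^{p-1}]/[w_i(1-w_i)^{p-2}]$; if $w_i=0$, then $b_j=f_{-j}(\mathbf{w})$ and $a_j=2^{p-1}f_i^{(-j)}(1/2)-b_j$.
   Context: Let $m>p\ge2$. Given a model matrix $\mathbf{X}\in\mathbb{R}^{m\times p}$ (rows $\mathbf{q}(\mathbf{x}_i)^T$ for distinct design points under a generalized linear model) and numbers $\nu_1,\ldots,\nu_m\ge0$ (where $\nu_i=(\partial\mu_i/\partial\eta_i)^2/\mathrm{Var}(Y_i)$), for $\mathbf{w}=(w_1,\ldots,w_m)^T$ with $w_i\ge0$, $\sum_iw_i=1$, let $\mathbf{W}=\mathrm{diag}\{w_1\nu_1,\ldots,w_m\nu_m\}$, $f(\mathbf{w})=|\mathbf{X}^T\mathbf{W}\mathbf{X}|$, and $f_{-j}(\mathbf{w})=|\mathbf{X}_{-j}^T\mathbf{W}\mathbf{X}_{-j}|$, where $\mathbf{X}_{-j}$ is $\mathbf{X}$ with its $j$th column removed. Given $\mathbf{w}$ and $i$ with $0\le w_i<1$, for $x\in[0,1]$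 let $\mathbf{w}^{(i)}(x)=\big(\tfrac{1-x}{1-w_i}w_1,\ldots,\tfrac{1-x}{1-w_i}w_{i-1},x,\tfrac{1-x}{1-w_i}w_{i+1},\ldots,\tfrac{1-x}{1-w_i}w_m\big)^T$ and $f_i^{(-j)}(x)=f_{-j}(\mathbf{w}^{(i)}(x))$. *)

From mathcomp Require Import all_boot all_order all_algebra.
Set Implicit Arguments. Unset Strict Implicit. Unset Printing Implicit Defensive.
Import Order.TTheory GRing.Theory Num.Theory.
Local Open Scope ring_scope.

Definition Wmx (R : realFieldType) (m : nat) (nu w : 'I_m -> R) : 'M[R]_m :=
  diag_mx (\row_k (w k * nu k)).

Definition fdet (R : realFieldType) (m p : nat) (X : 'M[R]_(m, p))
    (nu w : 'I_m -> R) : R :=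
  \det (X^T *m Wmx nu w *m X).

Definition fminus (R : realFieldType) (m p : nat) (X : 'M[R]_(m, p)) (j : 'I_p)
    (nu w : 'I_m -> R) : R :=
  \det ((col' j X)^T *m Wmx nu w *m col' j X).

Definition wpath (R : realFieldType) (m : nat) (w : 'I_m -> R) (i : 'I_m) (x : R)
    : 'I_m -> R :=
  fun k => if k == i then x else (1 - x) / (1 - w i) * w k.

Definition fij (R : realFieldType) (m p : nat) (X : 'M[R]_(m, p)) (nu w : 'I_m -> R)
    (i : 'I_m) (j : 'I_p) (x : R) : R :=
  fminus X j nu (wpath w i x).

(* Along the path, the weights of w^(i)(x) are (1 - x) times those of w^(i)(0)
   plus x nu_i at i, so the Gram matrix of X_{-j} is (1 - x) A + x nu_i y^T y,
   where y is the i-th row of X_{-j}.  A rank-one update changes a determinant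
   affinely, which yields the expansion with b = f_i^(-j)(0).  Gram determinants
   with nonnegative weights are nonnegative (positive definite forms have a
   positive determinant, by induction through Schur complements), so b >= 0,
   and a >= 0 since the expansion must stay nonnegative near x = 1.  If f(w) > 0
   the form X^T W X is positive definite, hence so is its restriction to the
   columns other than j, and on (0, 1) the path weights dominate a positive
   multiple of w.  The formulas for a and b are the expansion at x = w_i, where
   w^(i)(w_i) = w, and at x = 1/2. *)

From mathcomp Require Import all_boot all_order all_algebra.
From mathcomp Require Import ring lra.
Set Implicit Arguments. Unset Strict Implicit. Unset Printing Implicit Defensive.
Import Order.TTheory GRing.Theory Num.Theory.
Local Open Scope ring_scope.

(* At x = (b - a/2)/(b - a) the bracket a x + b (1 - x) equals a/2. *)
Lemma ge0_coef_of_ge0_on_01 (R : realFieldType) n (a b : R) : 0 <= b ->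
  (forall x, 0 < x < 1 -> 0 <= a * x * (1 - x) ^+ n + b * (1 - x) ^+ n.+1) ->
  0 <= a.
Proof.
move=> b_ge0 f_ge0; rewrite leNgt; apply/negP => a_lt0.
pose x := (b - a / 2) / (b - a).
have ba_gt0 : 0 < b - a by lra.
have x_gt0 : 0 < x by rewrite divr_gt0 //; lra.
have x_lt1 : x < 1 by rewrite ltr_pdivrMr // mul1r; lra.
have := f_ge0 x; rewrite x_gt0 x_lt1 => /(_ isT).
have -> : a * x * (1 - x) ^+ n + b * (1 - x) ^+ n.+1
          = (1 - x) ^+ n * (a * x + b * (1 - x)) by rewrite exprS; ring.
have -> : a * x + b * (1 - x) = a / 2 by rewrite /x; field; lra.
by rewrite pmulr_rge0 ?exprn_gt0 ?subr_gt0 //; lra.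
Qed.

Section PosDef.
Variable R : realFieldType.

Definition posdef n (M : 'M[R]_n) :=
  forall u : 'rV_n, u != 0 -> 0 < (u *m M *m u^T) 0 0.

Lemma det_block_schur N (a : R) (r : 'rV_N) (c : 'cV_N) (D : 'M_N) :
  a != 0 -> \det (block_mx a%:M r c D) = a * \det (D - a^-1 *: (c *m r)).
Proof.
move=> a_neq0.
have mulE : block_mx a%:M r c D *m block_mx 1%:M (- (a^-1 *: r)) 0 1%:M
            = block_mx a%:M 0 c (D - a^-1 *: (c *m r)).
  rewrite mulmx_block !mulmx1 !mulmx0 !addr0 mul_scalar_mx scalerN scalerA.
  by rewrite mulfV // scale1r addNr mulmxN -scalemxAr addrC.
have := congr1 determinant mulE.
by rewrite det_mulmx det_ublock !det1 !mulr1 det_lblock det_scalar1 => ->.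
Qed.

Lemma posdef_block_ul N (a : R) (r : 'rV_N) (c : 'cV_N) (D : 'M_N) :
  posdef (block_mx a%:M r c D) -> 0 < a.
Proof.
move=> /(_ (row_mx 1 0)).
rewrite mul_row_block !mul1mx !mul0mx !addr0 tr_row_mx mul_row_col trmx1 trmx0.
rewrite mulmx1 mulmx0 addr0 mxE eqxx mulr1n; apply.
by apply/negP => /eqP; rewrite -row_mx0 => /eq_row_mx [/eqP]; rewrite oner_eq0.
Qed.

Lemma posdef_schur N (a : R) (r : 'rV_N) (D : 'M_N) :
  posdef (block_mx a%:M r r^T D) -> posdef (D - a^-1 *: (r^T *m r)).
Proof.
move=> Mpd v v_neq0; have a_neq0 := lt0r_neq0 (posdef_block_ul Mpd).
pose t : 'M[R]_1 := - (a^-1 *: (v *m r^T)).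
have tvE : row_mx t v *m block_mx a%:M r r^T D
           = row_mx 0 (v *m (D - a^-1 *: (r^T *m r))).
  rewrite mul_row_block mul_mx_scalar /t scalerN scalerA mulfV // scale1r addNr.
  by rewrite mulmxBr -scalemxAr mulmxA addrC mulNmx -scalemxAl.
have := Mpd (row_mx t v); rewrite tvE tr_row_mx mul_row_col mul0mx add0r; apply.
by apply/negP => /eqP; rewrite -row_mx0 => /eq_row_mx [_ /eqP]; apply/negP.
Qed.

Lemma posdef_block_det_gt0 N (A : 'M[R]_1) r c (D : 'M_N) :
  (forall S : 'M_N, S^T = S -> posdef S -> 0 < \det S) ->
  (block_mx A r c D)^T = block_mx A r c D -> posdef (block_mx A r c D) ->
  0 < \det (block_mx A r c D).
Proof.
move=> det_gt0; rewrite tr_block_mx => /eq_block_mx [_ _ rcE DE].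
rewrite -rcE (mx11_scalar A) => Mpd; have A_gt0 := posdef_block_ul Mpd.
rewrite det_block_schur ?lt0r_neq0 // mulr_gt0 //; apply: det_gt0.
  by rewrite linearB /= linearZ /= trmx_mul trmxK DE.
exact: posdef_schur.
Qed.

Lemma posdef_det_gt0 n (M : 'M[R]_n) : M^T = M -> posdef M -> 0 < \det M.
Proof.
elim: n M => [M|n IH M]; first by rewrite det_mx00.
have MB := submxK (M : 'M_(1 + n)); rewrite -MB.
exact: (@posdef_block_det_gt0 n _ _ _ _ IH).
Qed.

Lemma trmx_col'1_mul n (j : 'I_n) :
  (col' j 1%:M)^T *m col' j 1%:M = 1%:M :> 'M[R]_n.-1.
Proof.
rewrite tr_col' trmx1 mul_rowsub_mx mul1mx.
by apply/matrixP => a b; rewrite !mxE (inj_eq lift_inj).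
Qed.

Lemma posdef_congr p q (M : 'M[R]_p) (S : 'M_(p, q)) :
  S^T *m S = 1%:M -> posdef M -> posdef (S^T *m M *m S).
Proof.
move=> STS Mpd z z_neq0.
have -> : z *m (S^T *m M *m S) *m z^T = (z *m S^T) *m M *m (z *m S^T)^T.
  by rewrite trmx_mul trmxK !mulmxA.
apply: Mpd; apply: contra z_neq0 => /eqP zS0.
by rewrite -[z]mulmx1 -STS mulmxA zS0 mul0mx.
Qed.

End PosDef.

Section Gram.
Variable R : realFieldType.

Definition gram m n (Z : 'M[R]_(m, n)) (d : 'I_m -> R) : 'M_n :=
  Z^T *m diag_mx (\row_k d k) *m Z.

Lemma eq_gram m n (Z : 'M[R]_(m, n)) d e :
  (forall k, d k = e k) -> gram Z d = gram Z e.
Proof.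
move=> de; rewrite /gram; congr (_ *m diag_mx _ *m _).
by apply/rowP => k; rewrite !mxE.
Qed.

Lemma tr_gram m n (Z : 'M[R]_(m, n)) d : (gram Z d)^T = gram Z d.
Proof. by rewrite !trmx_mul tr_diag_mx trmxK mulmxA. Qed.

Lemma gram_quadE m n (Z : 'M[R]_(m, n)) d (u : 'rV_n) :
  (u *m gram Z d *m u^T) 0 0 = \sum_k d k * ((Z *m u^T) k 0) ^+ 2.
Proof.
have -> : u *m gram Z d *m u^T
          = (Z *m u^T)^T *m diag_mx (\row_k d k) *m (Z *m u^T).
  by rewrite trmx_mul trmxK !mulmxA.
by rewrite mxE; apply: eq_bigr => k _; rewrite mul_mx_diag !mxE; ring.
Qed.

Lemma gram_mulmx m n q (Z : 'M[R]_(m, n)) (S : 'M_(n, q)) d :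
  gram (Z *m S) d = S^T *m gram Z d *m S.
Proof. by rewrite /gram trmx_mul !mulmxA. Qed.

Lemma gram_lin m n (Z : 'M[R]_(m, n)) d e (s t : R) :
  gram Z (fun k => s * d k + t * e k) = s *: gram Z d + t *: gram Z e.
Proof.
rewrite /gram; have -> : diag_mx (\row_k (s * d k + t * e k))
          = s *: diag_mx (\row_k d k) + t *: diag_mx (\row_k e k).
  apply/matrixP => k l; rewrite !mxE.
  by case: (k == l); rewrite /= ?mulr1n ?mulr0n; ring.
by rewrite mulmxDr mulmxDl -!scalemxAr -!scalemxAl.
Qed.

Lemma gram_delta m n (Z : 'M[R]_(m, n)) (i : 'I_m) :
  gram Z (fun k => (k == i)%:R) = (row i Z)^T *m row i Z.
Proof.
rewrite /gram; have -> : diag_mx (\row_k (k == i)%:R) = delta_mx i i :> 'M[R]_m.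
  apply/matrixP => k l; rewrite !mxE.
  have [<-|kl] := eqVneq k l; first by rewrite andbb.
  by have [ki|] := eqVneq k i; rewrite // -ki eq_sym (negPf kl).
by rewrite -(@mul_delta_mx R m 1 m 0 i i) rowE trmx_mul trmx_delta !mulmxA.
Qed.

Lemma posdef_gram m n (Z : 'M[R]_(m, n)) d :
  (forall k, 0 <= d k) -> \det (gram Z d) != 0 -> posdef (gram Z d).
Proof.
move=> d_ge0 det_neq0 u u_neq0.
have terms_ge0 k : 0 <= d k * ((Z *m u^T) k 0) ^+ 2 by rewrite mulr_ge0 ?sqr_ge0.
rewrite lt_def gram_quadE sumr_ge0 // andbT; apply/negP => /eqP /psumr_eq0P.
move=> /(_ (fun k _ => terms_ge0 k)) quad0; move: det_neq0; apply/negP/negPn.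
have DZu : diag_mx (\row_k d k) *m (Z *m u^T) = 0.
  apply/matrixP => k l; have /eqP := quad0 k isT.
  rewrite (ord1 l) mul_diag_mx !mxE mulf_eq0 sqrf_eq0.
  by case/orP => /eqP ->; rewrite ?mul0r ?mulr0.
apply/det0P; exists u => //; rewrite -tr_gram -[u]trmxK -trmx_mul.
by rewrite /gram -!mulmxA DZu mulmx0 trmx0.
Qed.

Lemma det_gram_ge0 m n (Z : 'M[R]_(m, n)) d :
  (forall k, 0 <= d k) -> 0 <= \det (gram Z d).
Proof.
move=> d_ge0; have [->//|det_neq0] := eqVneq (\det (gram Z d)) 0.
by apply/ltW/posdef_det_gt0; [exact: tr_gram | exact: posdef_gram].
Qed.

Lemma posdef_gram_dom m n (Z : 'M[R]_(m, n)) d e (c : R) :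
  0 < c -> (forall k, c * d k <= e k) -> posdef (gram Z d) -> posdef (gram Z e).
Proof.
move=> c_gt0 de Zpd u u_neq0.
apply: (lt_le_trans (mulr_gt0 c_gt0 (Zpd u u_neq0))).
rewrite !gram_quadE mulr_sumr; apply: ler_sum => k _.
by rewrite mulrA ler_wpM2r ?sqr_ge0.
Qed.

End Gram.

Section RankOneUpdate.
Variable R : realFieldType.

Lemma det_rank1 n (y : 'rV[R]_n.+2) : \det (y^T *m y) = 0.
Proof.
have yyE := mul_row_col y^T (0 : 'M[R]_(n.+2, n.+1)) y (0 : 'M[R]_(n.+1, n.+2)).
rewrite mulmx0 addr0 in yyE.
rewrite -yyE (@det_mulmx _ n.+2) (expand_det_col _ (rshift 1 (0 : 'I_n.+1))).
by rewrite big1 ?mul0r // => k _; rewrite row_mxEr mxE mul0r.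
Qed.

(* The bordered matrix [1, -u y; y^T, A] has determinant det (A + u y^T y),
   and is affine in u by multilinearity in its first row. *)
Lemma det_add_rank1_affine N (A : 'M[R]_N) (y : 'rV_N) :
  exists q, forall u, \det (A + u *: (y^T *m y)) = \det A + u * q.
Proof.
exists (\det (block_mx (0 : 'M[R]_1) (- y) y^T A)) => u.
pose Z (v : R) := block_mx (1%:M : 'M[R]_1) (- (v *: y)) y^T A.
have ZE v : \det (A + v *: (y^T *m y)) = \det (Z v).
  have mulE : Z v *m block_mx 1%:M (v *: y) 0 1%:M
           = block_mx 1%:M 0 y^T (A + v *: (y^T *m y)).
    by rewrite mulmx_block !mulmx1 !mulmx0 !addr0 mul1mx subrr -scalemxAr addrC.
  have := congr1 determinant mulE.
  by rewrite det_mulmx det_ublock det_lblock !det1 !mul1r !mulr1 => ->.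
have -> : \det A = \det (Z 0) by rewrite -ZE scale0r addr0.
rewrite ZE -[\det (Z 0)]mul1r.
apply: (@determinant_multilinear _ _ _ _ _ (lshift N (0 : 'I_1))).
- rewrite /Z !block_mxEv !rowKu !row_id !scale_row_mx add_row_mx !scale1r.
  by rewrite !scaler0 addr0 scale0r oppr0 add0r scalerN.
- by rewrite /Z !block_mxEv !row'Ku; f_equal; apply/matrixP => -[].
- by rewrite /Z !block_mxEv !row'Ku; f_equal; apply/matrixP => -[].
Qed.

Lemma det_scale_add_rank1 n (A : 'M[R]_n.+1) (y : 'rV_n.+1) :
  exists q, forall s t,
    \det (s *: A + t *: (y^T *m y)) = s ^+ n.+1 * \det A + t * s ^+ n * q.
Proof.
have [q detE] := det_add_rank1_affine A y; exists q => s t.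
have [->|s_neq0] := eqVneq s 0.
  rewrite scale0r add0r detZ expr0n /= mul0r add0r.
  case: n A y detE => [|n] A y detE; last first.
    by rewrite det_rank1 expr0n /= !(mulr0, mul0r).
  have := detE 1; rewrite scale1r mul1r !det_mx11 mxE => /addrI <-.
  by rewrite expr1 expr0 mulr1.
have -> : s *: A + t *: (y^T *m y) = s *: (A + (t / s) *: (y^T *m y)).
  by rewrite scalerDr scalerA mulrCA divff // mulr1.
by rewrite detZ detE exprS; field.
Qed.

End RankOneUpdate.

Section WeightPath.
Variables (R : realFieldType) (m : nat) (w : 'I_m -> R) (i : 'I_m).
Hypotheses (w_ge0 : forall k, 0 <= w k) (wi_lt1 : w i < 1).

Lemma wpath_ge0 x k : 0 <= x <= 1 -> 0 <= wpath w i x k.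
Proof.
move=> /andP[x_ge0 x_le1]; rewrite /wpath; case: eqP => // _.
by rewrite mulr_ge0 // divr_ge0 // subr_ge0 // ltW.
Qed.

Lemma wpath_self k : wpath w i (w i) k = w k.
Proof.
have wi_neq1 : 1 - w i != 0 by rewrite subr_eq0 eq_sym lt_eqF.
by rewrite /wpath; case: eqP => [->|_]; rewrite ?divff ?mul1r.
Qed.

Lemma wpathE x k : wpath w i x k = (1 - x) * wpath w i 0 k + x * (k == i)%:R.
Proof. by rewrite /wpath; case: eqP => _; rewrite /=; ring. Qed.

Lemma wpath_dominates x :
  0 < x < 1 -> exists2 c, 0 < c & forall k, c * w k <= wpath w i x k.
Proof.
move=> /andP[x_gt0 x_lt1].
have wi_sub_gt0 : 0 < 1 - w i by rewrite subr_gt0.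
exists (Num.min x ((1 - x) / (1 - w i))).
  by rewrite lt_min x_gt0 divr_gt0 // subr_gt0.
move=> k; rewrite /wpath; case: eqP => [->|_]; last first.
  by rewrite ler_wpM2r // ge_min lexx orbT.
have : Num.min x ((1 - x) / (1 - w i)) <= x by rewrite ge_min lexx.
have := w_ge0 i; nra.
Qed.

End WeightPath.

Section DeletedColumnPath.
Variables (R : realFieldType) (m n : nat) (X : 'M[R]_(m, n.+2)).
Variables (nu w : 'I_m -> R) (i : 'I_m) (j : 'I_n.+2).
Hypotheses (nu_ge0 : forall k, 0 <= nu k) (w_ge0 : forall k, 0 <= w k).
Hypothesis wi_lt1 : w i < 1.

Let Y := col' j X.
Let d x k := wpath w i x k * nu k.

Lemma fijE x : fij X nu w i j x = \det (gram Y (d x)).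
Proof. by []. Qed.

Lemma fminus_fij_wi : fminus X j nu w = fij X nu w i j (w i).
Proof.
by rewrite fijE; congr (\det _); apply: eq_gram => k; rewrite /d wpath_self.
Qed.

Lemma gram_wpath x :
  gram Y (d x) = (1 - x) *: gram Y (d 0) + (x * nu i) *: ((row i Y)^T *m row i Y).
Proof.
rewrite -gram_delta -gram_lin; apply: eq_gram => k.
by rewrite /d wpathE; case: eqP => [->|_]; rewrite /=; ring.
Qed.

Lemma fij_ge0 x : 0 <= x <= 1 -> 0 <= fij X nu w i j x.
Proof. by move=> x01; apply: det_gram_ge0 => k; rewrite mulr_ge0 ?wpath_ge0. Qed.

Lemma fij_expansion : exists2 a, 0 <= a & forall x,
  fij X nu w i j x = a * x * (1 - x) ^+ n + fij X nu w i j 0 * (1 - x) ^+ n.+1.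
Proof.
have [q detE] := det_scale_add_rank1 (gram Y (d 0)) (row i Y).
have fE x : fij X nu w i j x
    = nu i * q * x * (1 - x) ^+ n + fij X nu w i j 0 * (1 - x) ^+ n.+1.
  rewrite fijE gram_wpath detE.
  by rewrite -[\det (gram Y (d 0))]/(fij X nu w i j 0); ring.
exists (nu i * q) => //.
have b_ge0 : 0 <= fij X nu w i j 0 by apply: fij_ge0; rewrite lexx ler01.
apply: (ge0_coef_of_ge0_on_01 (n := n) b_ge0) => x /andP[x_gt0 x_lt1].
by rewrite -fE fij_ge0 // !ltW.
Qed.

(* Deleting a column compresses the positive definite form of f(w), and on
   (0, 1) the path weights dominate a positive multiple of w. *)
Lemma fij_gt0 x : 0 < fdet X nu w -> 0 < x < 1 -> 0 < fij X nu w i j x.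
Proof.
move=> fdet_gt0 x01.
have wnu_ge0 k : 0 <= w k * nu k by rewrite mulr_ge0.
have Xpd : posdef (gram X (fun k => w k * nu k)).
  exact: posdef_gram wnu_ge0 (lt0r_neq0 fdet_gt0).
have Ypd : posdef (gram Y (fun k => w k * nu k)).
  have -> : Y = X *m col' j 1%:M by rewrite mulmx_colsub mulmx1.
  rewrite gram_mulmx.
  exact: posdef_congr (trmx_col'1_mul _ j) Xpd.
have [c c_gt0 c_dom] := wpath_dominates w_ge0 wi_lt1 x01.
rewrite fijE; apply: posdef_det_gt0; first exact: tr_gram.
apply: posdef_gram_dom c_gt0 _ Ypd => k.
by rewrite mulrA ler_wpM2r.
Qed.

End DeletedColumnPath.

Theorem lemma4 (R : realFieldType) (m p : nat) (X : 'M[R]_(m, p))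
    (nu w : 'I_m -> R) (i : 'I_m) (j : 'I_p) :
  (p < m)%N -> (2 <= p)%N ->
  (forall k, 0 <= nu k) ->
  (forall k, 0 <= w k) -> \sum_k w k = 1 ->
  0 <= w i -> w i < 1 ->
  exists a b : R,
    0 <= a /\ 0 <= b /\
      (forall x, 0 <= x <= 1 ->
         fij X nu w i j x = a * x * (1 - x) ^+ (p - 2) + b * (1 - x) ^+ (p - 1)) /\
      (0 < fdet X nu w ->
         (forall x, 0 < x < 1 -> 0 < fij X nu w i j x) /\ 0 < a + b) /\
      (0 < w i ->
         b = fij X nu w i j 0 /\
         a = (fminus X j nu w - b * (1 - w i) ^+ (p - 1))
               / (w i * (1 - w i) ^+ (p - 2))) /\
    (w i = 0 ->
         b = fminus X j nu w /\
         a = 2 ^+ (p - 1) * fij X nu w i j (2^-1) - b).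
Proof.
move=> _ p_ge2 nu_ge0 w_ge0 _ _ wi_lt1.
case: p X j p_ge2 => [|[|n]] // X j _; rewrite !subSS !subn0.
have [a a_ge0 fE] := fij_expansion X j nu_ge0 w_ge0 wi_lt1.
set b := fij X nu w i j 0 in fE *.
have b_ge0 : 0 <= b by apply: fij_ge0; rewrite ?lexx ?ler01.
have fminusE :
    fminus X j nu w = a * w i * (1 - w i) ^+ n + b * (1 - w i) ^+ n.+1.
  by rewrite (fminus_fij_wi X nu j wi_lt1) fE.
have two_pow_neq0 : 2 ^+ n.+1 != 0 :> R by rewrite expf_neq0 // pnatr_eq0.
have f_half : fij X nu w i j 2^-1 = (a + b) / 2 ^+ n.+1.
  rewrite fE; have -> : 1 - 2^-1 = 2^-1 :> R by field.
  by rewrite !exprVn !exprS; field; rewrite expf_neq0 // pnatr_eq0.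
exists a, b; do 2!split=> //; split=> [x _|]; first exact: fE.
split=> [fdet_gt0|].
  split=> [x|]; first exact: fij_gt0.
  have half01 : 0 < (2^-1 : R) < 1 by rewrite invr_gt0 invf_lt1 ?ltr0n // ltr1n.
  have := fij_gt0 j nu_ge0 w_ge0 wi_lt1 fdet_gt0 half01.
  by rewrite f_half pmulr_lgt0 // invr_gt0 exprn_gt0 ?ltr0n.
split=> [wi_gt0 | wi0]; split=> //.
- have wi_neq1 : 1 - w i != 0 by rewrite subr_eq0 eq_sym lt_eqF.
  by rewrite fminusE exprS; field; rewrite expf_neq0 // gt_eqF.
- by rewrite fminusE wi0 mulr0 mul0r subr0 expr1n mulr1 add0r.
- by rewrite f_half mulrC -mulrA mulVf // mulr1 addrK.
Qed.
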